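(* Let $\rho:\mathcal G\to G$ be a morphism of flat affine group schemes over $R$ which induces an isomorphism $\mathcal G_K\to G_K$ on generic fibres. Put $G_0=G$ and $\rho_0=\rho$. Inductively, having $\rho_n:\mathcal G\to G_n$, let $G_{n+1}\to G_n$ be the Neron blowup of $G_n$ at the closed subgroup scheme $\mathrm{Im}(\rho_n\otimes k)\subset G_n\otimes k$ (the schematic image of $\rho_n\otimes k$), and let $\rho_{n+1}:\mathcal G\to G_{n+1}$ be the morphism through which $\rho_n$ factors (by the universal property of the Neron blowup). Then $\varprojlim_n\rho_n:\mathcal G\to\varprojlim_n G_n$ is an isomorphism. (No finite type hypothesis is needed.)
   Context: $R$ is a discrete valuation ring with uniformizer $\pi$, fraction field $K$, residue field $k$. For a flat affine group scheme $G$ over $R$ we regard $R[G]\subset K[G]$. For a closed subgroup $H_0\subset G\otimes k$ with ideal $J\subset R[G]$ (inverse image of its ideal in $k[G]$), the Neron blowup $G'$ of $G$ at $H_0$ is $\mathrm{Spec}$ of the subring of $K[G]$ generated by $R[G]$ and $\pi^{-1}J$. Universal property: if $\mathcal G\to G$ is a morphism of flat affine group schemes with $\mathcal G_k\to G_k$ factoring through $H_0$, it factors uniquely through $G'\to G$. The sequence $\cdots\to G_1\to G_0$ in the claim is called the standard blowup sequence of $\mathcal G\to G$. *)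

From HB Require Import structures.
From mathcomp Require Import all_boot all_order all_algebra.
Set Implicit Arguments. Unset Strict Implicit. Unset Printing Implicit Defensive.
Import GRing.Theory.
Local Open Scope ring_scope.

Definition is_dvr_uniformizer (R : idomainType) (pi : R) : Prop :=
  pi != 0 /\ pi \isn't a GRing.unit /\
  (forall x : R, x != 0 -> exists (n : nat) (u : R), u \is a GRing.unit /\ x = u * pi ^+ n).

Definition is_alghom (R : comNzRingType) (A S : comAlgType R) (f : A -> S) : Prop :=
  (forall x y, f (x + y) = f x + f y) /\ (forall x y, f (x * y) = f x * f y) /\
  f 1 = 1 /\ (forall (r : R) x, f (r *: x) = r *: f x).

(* S-valued points of Spec A, i.e. Hom_{R-alg}(A, S). *)
Definition pts (R : comNzRingType) (A S : comAlgType R) := {f : A -> S | is_alghom f}.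

Lemma is_alghom_comp (R : comNzRingType) (A B S : comAlgType R) (g : pts A B) (h : pts B S) :
  is_alghom (fun a => sval h (sval g a)).
Proof.
case: g => g [g1 [g2 [g3 g4]]]; case: h => h [h1 [h2 [h3 h4]]] /=.
split; [|split; [|split]] => *; by rewrite ?g1 ?g2 ?g3 ?g4 ?h1 ?h2 ?h3 ?h4.
Qed.

Definition pcomp (R : comNzRingType) (A B S : comAlgType R) (g : pts A B) (h : pts B S)
  : pts A S := exist _ _ (is_alghom_comp g h).

(* An affine group scheme structure on Spec A: a group structure on the
   points Hom_{R-alg}(A, S), natural in the R-algebra S (functor of points). *)
Record grp_sch (R : comNzRingType) (A : comAlgType R) := GrpSch {
  gmul : forall S : comAlgType R, pts A S -> pts A S -> pts A S;
  gone : forall S : comAlgType R, pts A S;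
  ginv : forall S : comAlgType R, pts A S -> pts A S;
  gmulA : forall S (x y z : pts A S), gmul (gmul x y) z = gmul x (gmul y z);
  gmul1 : forall S (x : pts A S), gmul (gone S) x = x;
  gmulV : forall S (x : pts A S), gmul (ginv x) x = gone S;
  gnat : forall (S S' : comAlgType R) (h : pts S S') (x y : pts A S),
      pcomp (gmul x y) h = gmul (pcomp x h) (pcomp y h)
}.

(* Flatness over a DVR = pi-torsion-freeness. *)
Definition flat_over (R : comNzRingType) (pi : R) (A : comAlgType R) : Prop :=
  forall a : A, pi *: a = 0 -> a = 0.

(* A morphism of group schemes Spec A1 -> Spec A2 given by the comorphism
   phi : A2 -> A1 (it is a homomorphism on points for every S). *)
Definition grp_hom (R : comNzRingType) (A1 A2 : comAlgType R)
  (G1 : grp_sch A1) (G2 : grp_sch A2) (phi : pts A2 A1) : Prop :=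
  forall (S : comAlgType R) (x y : pts A1 S),
    pcomp phi (gmul G1 x y) = gmul G2 (pcomp phi x) (pcomp phi y).

(* The morphism Spec A1 -> Spec A2 with comorphism phi induces an isomorphism
   on generic fibres: bijection on S-points for every R-algebra S in which
   pi is invertible (= every K-algebra, K = R[1/pi]). *)
Definition generic_iso (R : comNzRingType) (pi : R) (A1 A2 : comAlgType R)
  (phi : pts A2 A1) : Prop :=
  forall S : comAlgType R, (exists s : S, s * pi%:A = 1) ->
    bijective (fun x : pts A1 S => pcomp phi x).

Definition in_subring_gen (T : comNzRingType) (X : T -> Prop) (t : T) : Prop :=
  forall P : T -> Prop,
    (forall x, X x -> P x) -> P 1 ->
    (forall x y, P x -> P y -> P (x - y)) ->
    (forall x y, P x -> P y -> P (x * y)) -> P t.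

(* f : A -> A' exhibits Spec A' -> Spec A as the Neron blowup of Spec A at the
   closed subscheme of the special fibre whose ideal, pulled back to A, is J:
   A' is pi-torsion free, f is injective (so A' sits inside A[1/pi] = K[G]),
   f(j)/pi lies in A' for every j in J, and A' is generated as a ring by
   f(A) and pi^{-1} f(J). *)
Definition neron_blowup (R : comNzRingType) (pi : R) (A A' : comAlgType R)
  (J : A -> Prop) (f : pts A A') : Prop :=
  flat_over pi A' /\ injective (sval f) /\
  (forall j, J j -> exists b : A', pi *: b = sval f j) /\
  (forall t : A', in_subring_gen
      (fun x : A' => (exists a, x = sval f a) \/ (exists j, J j /\ pi *: x = sval f j)) t).

(* Ideal (pulled back to A) of the schematic image of (Spec C -> Spec A) (x) k,
   k = R/pi: the kernel of A/pi -> C/pi, pulled back to A. *)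
Definition sch_image_special_ideal (R : comNzRingType) (pi : R) (A C : comAlgType R)
  (phi : pts A C) : A -> Prop :=
  fun a => exists c : C, sval phi a = pi *: c.

Fixpoint trans (R : comNzRingType) (A : nat -> comAlgType R)
  (f : forall n, pts (A n) (A n.+1)) (n k : nat) : A n -> A (k + n)%N :=
  match k return A n -> A (k + n)%N with
  | 0 => fun a => a
  | k'.+1 => fun a => sval (f (k' + n)%N) (@trans R A f n k' a)
  end.
Arguments trans {R A} f n k _.

From Pilot Require Import Defs.
From HB Require Import structures.
From mathcomp Require Import all_boot all_order all_algebra.
From mathcomp Require Import ring.
From Stdlib Require Import FunctionalExtensionality ProofIrrelevance.
Set Implicit Arguments. Unset Strict Implicit. Unset Printing Implicit Defensive.
Import GRing.Theory.
Local Open Scope ring_scope.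
Local Open Scope quotient_scope.

(* Evaluating the generic isomorphism at the R-algebras A_0[1/pi] and
   C[1/pi] shows that phi_0 : A_0 -> C is injective and that every c in C
   has some multiple pi^m c in its image.  Injectivity climbs the tower:
   A_(n+1) is generated by A_n and pi^-1 J_n, so each of its elements has a
   pi-power multiple coming from A_n, and A_(n+1) has no pi-torsion.  For
   surjectivity, if pi^(m+1) c = phi_n a then a lies in the ideal J_n of
   Im(rho_n (x) k), so f_n a = pi b in A_(n+1) and pi^m c = phi_(n+1) b:
   each blowup divides out one power of pi. *)

Section AlgebraMorphisms.
Variables (R : comNzRingType) (B1 B2 : comAlgType R) (g : pts B1 B2).
Local Notation g_ := (sval g).

Lemma ptsD x y : g_ (x + y) = g_ x + g_ y. Proof. by case: g => h [? ?]. Qed.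
Lemma ptsM x y : g_ (x * y) = g_ x * g_ y. Proof. by case: g => h [? [? ?]]. Qed.
Lemma pts1 : g_ 1 = 1. Proof. by case: g => h [? [? [? ?]]]. Qed.
Lemma ptsZ r x : g_ (r *: x) = r *: g_ x. Proof. by case: g => h [? [? [? ?]]]. Qed.

Lemma pts0 : g_ 0 = 0.
Proof. by apply: (addrI (g_ 0)); rewrite -ptsD !addr0. Qed.

Lemma ptsB x y : g_ (x - y) = g_ x - g_ y.
Proof.
suff ptsN z : g_ (- z) = - g_ z by rewrite ptsD ptsN.
by apply: (addrI (g_ z)); rewrite -ptsD !subrr pts0.
Qed.

Lemma ptsXM (r : R) k x : g_ (r%:A ^+ k * x) = r%:A ^+ k * g_ x.
Proof.
elim: k x => [|k IHk] x; first by rewrite !expr0 !mul1r.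
by rewrite exprS -!mulrA !mulr_algl ptsZ IHk exprS -mulrA mulr_algl.
Qed.

End AlgebraMorphisms.

Lemma pts_ext (R : comNzRingType) (B1 B2 : comAlgType R) (p q : pts B1 B2) :
  sval p =1 sval q -> p = q.
Proof.
case: p q => [p hp] [q hq] /= /functional_extensionality epq.
by subst q; congr exist; apply: proof_irrelevance.
Qed.

Section PiLocalization.
Variables (R : comNzRingType) (pi : R) (B : comAlgType R).
Hypothesis flatB : flat_over pi B.

Local Notation P := (pi%:A : B).

Lemma piXM_eq0 k (z : B) : P ^+ k * z = 0 -> z = 0.
Proof.
elim: k => [|k IHk]; first by rewrite expr0 mul1r.
by rewrite exprS -mulrA mulr_algl => /flatB.
Qed.

(* The pair (x, n) stands for the fraction x / pi^n; as B has no pi-torsion,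
   equality of fractions needs no extra pi-power factor. *)
Definition frac := (B * nat)%type.
Definition frac_eq (x y : frac) := P ^+ y.2 * x.1 == P ^+ x.2 * y.1.

Lemma frac_eq_refl : reflexive frac_eq.
Proof. by move=> x; rewrite /frac_eq mulrC. Qed.

Lemma frac_eq_sym : symmetric frac_eq.
Proof. by move=> x y; rewrite /frac_eq eq_sym. Qed.

Lemma frac_eq_trans : transitive frac_eq.
Proof.
move=> y x z /eqP exy /eqP eyz; rewrite /frac_eq -subr_eq0; apply/eqP.
apply: (@piXM_eq0 y.2).
have -> : P ^+ y.2 * (P ^+ z.2 * x.1 - P ^+ x.2 * z.1) =
          P ^+ z.2 * (P ^+ y.2 * x.1) - P ^+ x.2 * (P ^+ y.2 * z.1) by ring.
by rewrite exy -eyz; ring.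
Qed.

Canonical frac_eq_equiv := EquivRel frac_eq frac_eq_refl frac_eq_sym frac_eq_trans.
Definition loc := {eq_quot frac_eq}.
HB.instance Definition _ : EqQuotient _ frac_eq loc := EqQuotient.on loc.
HB.instance Definition _ := Choice.on loc.

Lemma loc_eqP (x y : frac) :
  \pi_loc x = \pi_loc y <-> P ^+ y.2 * x.1 = P ^+ x.2 * y.1.
Proof. by split=> [/eqmodP/eqP | exy]; last apply/eqmodP/eqP. Qed.

Lemma frac_eq_repr (x : frac) : frac_eq (repr (\pi_loc x)) x.
Proof. by apply/eqmodP; rewrite reprK. Qed.

Definition frac_add (x y : frac) : frac := (P ^+ y.2 * x.1 + P ^+ x.2 * y.1, (x.2 + y.2)%N).
Definition frac_opp (x : frac) : frac := (- x.1, x.2).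
Definition frac_mul (x y : frac) : frac := (x.1 * y.1, (x.2 + y.2)%N).
Definition frac_scale (r : R) (x : frac) : frac := (r%:A * x.1, x.2).

Lemma frac_add_compat x x' y y' :
  frac_eq x x' -> frac_eq y y' -> frac_eq (frac_add x y) (frac_add x' y').
Proof.
move=> /eqP ex /eqP ey; apply/eqP; rewrite /= !exprD.
have -> : P ^+ x'.2 * P ^+ y'.2 * (P ^+ y.2 * x.1 + P ^+ x.2 * y.1) =
          P ^+ y'.2 * P ^+ y.2 * (P ^+ x'.2 * x.1) +
          P ^+ x'.2 * P ^+ x.2 * (P ^+ y'.2 * y.1) by ring.
by rewrite ex ey; ring.
Qed.

Lemma frac_opp_compat x x' : frac_eq x x' -> frac_eq (frac_opp x) (frac_opp x').
Proof. by move=> /eqP ex; apply/eqP; rewrite /= !mulrN ex. Qed.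

Lemma frac_mul_compat x x' y y' :
  frac_eq x x' -> frac_eq y y' -> frac_eq (frac_mul x y) (frac_mul x' y').
Proof.
move=> /eqP ex /eqP ey; apply/eqP; rewrite /= !exprD.
have -> : P ^+ x'.2 * P ^+ y'.2 * (x.1 * y.1) =
          (P ^+ x'.2 * x.1) * (P ^+ y'.2 * y.1) by ring.
by rewrite ex ey; ring.
Qed.

Lemma frac_scale_compat r x x' : frac_eq x x' -> frac_eq (frac_scale r x) (frac_scale r x').
Proof. by move=> /eqP ex; apply/eqP; rewrite /= mulrCA ex mulrCA. Qed.

Definition loc_add := locked (fun z w : loc => \pi_loc (frac_add (repr z) (repr w))).
Definition loc_opp := locked (fun z : loc => \pi_loc (frac_opp (repr z))).
Definition loc_mul := locked (fun z w : loc => \pi_loc (frac_mul (repr z) (repr w))).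
Definition loc_scale := locked (fun r (z : loc) => \pi_loc (frac_scale r (repr z))).
Definition loc_zero : loc := \pi_loc (0, 0%N).
Definition loc_one : loc := \pi_loc (1, 0%N).

Lemma pi_loc_add x y : loc_add (\pi_loc x) (\pi_loc y) = \pi_loc (frac_add x y).
Proof. by rewrite /loc_add -lock; apply/eqmodP/frac_add_compat; apply: frac_eq_repr. Qed.

Lemma pi_loc_opp x : loc_opp (\pi_loc x) = \pi_loc (frac_opp x).
Proof. by rewrite /loc_opp -lock; apply/eqmodP/frac_opp_compat/frac_eq_repr. Qed.

Lemma pi_loc_mul x y : loc_mul (\pi_loc x) (\pi_loc y) = \pi_loc (frac_mul x y).
Proof. by rewrite /loc_mul -lock; apply/eqmodP/frac_mul_compat; apply: frac_eq_repr. Qed.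

Lemma pi_loc_scale r x : loc_scale r (\pi_loc x) = \pi_loc (frac_scale r x).
Proof. by rewrite /loc_scale -lock; apply/eqmodP/frac_scale_compat/frac_eq_repr. Qed.

Ltac loc_ring :=
  rewrite ?(pi_loc_add, pi_loc_opp, pi_loc_mul, pi_loc_scale);
  apply/loc_eqP; rewrite /= ?exprD ?expr0 ?scale1r ?scalerDl; ring.

Lemma loc_addA : associative loc_add.
Proof. by elim/quotW=> x; elim/quotW=> y; elim/quotW=> z; loc_ring. Qed.
Lemma loc_addC : commutative loc_add.
Proof. by elim/quotW=> x; elim/quotW=> y; loc_ring. Qed.
Lemma loc_add0 : left_id loc_zero loc_add.
Proof. by elim/quotW=> x; loc_ring. Qed.
Lemma loc_addN : left_inverse loc_zero loc_opp loc_add.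
Proof. by elim/quotW=> x; loc_ring. Qed.

HB.instance Definition _ := GRing.isZmodule.Build loc loc_addA loc_addC loc_add0 loc_addN.

Lemma pi_locD x y : \pi_loc x + \pi_loc y = \pi_loc (frac_add x y).
Proof. exact: pi_loc_add. Qed.

Lemma loc_mulA : associative loc_mul.
Proof. by elim/quotW=> x; elim/quotW=> y; elim/quotW=> z; loc_ring. Qed.
Lemma loc_mulC : commutative loc_mul.
Proof. by elim/quotW=> x; elim/quotW=> y; loc_ring. Qed.
Lemma loc_mul1 : left_id loc_one loc_mul.
Proof. by elim/quotW=> x; loc_ring. Qed.
Lemma loc_mulDl : left_distributive loc_mul loc_add.
Proof. by elim/quotW=> x; elim/quotW=> y; elim/quotW=> z; loc_ring. Qed.
Lemma loc_one_neq0 : loc_one != loc_zero.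
Proof. by apply/negP => /eqP /loc_eqP /=; rewrite !mul1r; apply/eqP/oner_neq0. Qed.

HB.instance Definition _ :=
  GRing.Zmodule_isComNzRing.Build loc loc_mulA loc_mulC loc_mul1 loc_mulDl loc_one_neq0.

Lemma loc_scaleA a b z : loc_scale a (loc_scale b z) = loc_scale (a * b) z.
Proof. by elim/quotW: z => x; rewrite !pi_loc_scale /frac_scale /= !mulr_algl scalerA. Qed.
Lemma loc_scale1 : left_id 1 loc_scale.
Proof. by elim/quotW=> x; loc_ring. Qed.
Lemma loc_scaleDr : right_distributive loc_scale loc_add.
Proof. by move=> a; elim/quotW=> x; elim/quotW=> y; loc_ring. Qed.
Lemma loc_scaleDl z : {morph loc_scale^~ z : a b / a + b >-> a + b}.
Proof. by move=> a b; elim/quotW: z => x; rewrite !pi_loc_scale pi_locD; loc_ring. Qed.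

HB.instance Definition _ :=
  GRing.Zmodule_isLmodule.Build R loc loc_scaleA loc_scale1 loc_scaleDr loc_scaleDl.

Lemma pi_locM x y : \pi_loc x * \pi_loc y = \pi_loc (frac_mul x y).
Proof. exact: pi_loc_mul. Qed.

Lemma pi_locZ r x : r *: \pi_loc x = \pi_loc (frac_scale r x).
Proof. exact: pi_loc_scale. Qed.

Lemma loc_scaleAl (a : R) (u v : loc) : a *: (u * v) = (a *: u) * v.
Proof. by elim/quotW: u => x; elim/quotW: v => y; rewrite !pi_locM !pi_locZ pi_locM; loc_ring. Qed.

HB.instance Definition _ := GRing.Lmodule_isLalgebra.Build R loc loc_scaleAl.
HB.instance Definition _ := GRing.Lalgebra_isComAlgebra.Build R loc.

Definition to_loc (b : B) : loc := \pi_loc (b, 0%N).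

Lemma to_loc_alghom : is_alghom to_loc.
Proof.
split; [|split; [|split]] => //.
- by move=> x y; rewrite pi_locD; loc_ring.
- by move=> x y; rewrite pi_locM; loc_ring.
- by move=> r x; rewrite pi_locZ /frac_scale /= mulr_algl.
Qed.

Definition to_locP : pts B loc := exist _ to_loc to_loc_alghom.

Lemma to_loc_inj : injective to_loc.
Proof. by move=> x y /loc_eqP /=; rewrite !mul1r. Qed.

Lemma pi_loc1 : \pi_loc (1, 0%N) = 1. Proof. by []. Qed.

Lemma loc_pi_unit : exists s : loc, s * pi%:A = 1.
Proof. by exists (\pi_loc (1, 1%N)); rewrite -pi_loc1 pi_locZ pi_locM; loc_ring. Qed.

End PiLocalization.

Section LocalizationMap.
Variables (R : comNzRingType) (pi : R) (B1 B2 : comAlgType R).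
Variables (flat1 : flat_over pi B1) (flat2 : flat_over pi B2) (g : pts B1 B2).
Local Notation L1 := (loc flat1).
Local Notation L2 := (loc flat2).

Definition loc_map := locked (fun z : L1 => \pi_L2 (sval g (repr z).1, (repr z).2)).

Lemma loc_map_pi x : loc_map (\pi_L1 x) = \pi_L2 (sval g x.1, x.2).
Proof.
rewrite /loc_map -lock; apply/loc_eqP; rewrite /= -!ptsXM.
by congr (sval g _); apply/eqP/frac_eq_repr.
Qed.

Lemma loc_map_alghom : is_alghom loc_map.
Proof.
split; [|split; [|split]].
- elim/quotW=> x; elim/quotW=> y; rewrite pi_locD !loc_map_pi pi_locD.
  by rewrite /frac_add /= ptsD !ptsXM.
- elim/quotW=> x; elim/quotW=> y; rewrite pi_locM !loc_map_pi pi_locM.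
  by rewrite /frac_mul /= ptsM.
- by rewrite -[X in loc_map X](pi_loc1 flat1) loc_map_pi pts1 pi_loc1.
- move=> r; elim/quotW=> x; rewrite pi_locZ !loc_map_pi pi_locZ.
  by rewrite /frac_scale /= !mulr_algl ptsZ.
Qed.

Definition loc_mapP : pts L1 L2 := exist _ loc_map loc_map_alghom.

End LocalizationMap.

Section GenericIsomorphism.
Variables (R : comNzRingType) (pi : R) (A C : comAlgType R) (phi : pts A C).
Hypotheses (flatA : flat_over pi A) (phi_gen : generic_iso pi phi).

Lemma generic_iso_retraction :
  exists y : pts C (loc flatA), forall a, sval y (sval phi a) = to_loc flatA a.
Proof.
have [y _ phi_y] := phi_gen (loc_pi_unit flatA).
exists (y (to_locP flatA)) => a.
exact: (congr1 (fun p : pts _ _ => sval p a) (phi_y (to_locP flatA))).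
Qed.

Lemma generic_iso_inj : injective (sval phi).
Proof.
have [y phi_y] := generic_iso_retraction.
by move=> a b eab; apply: (@to_loc_inj _ _ _ flatA); rewrite -!phi_y eab.
Qed.

Lemma generic_iso_saturated : flat_over pi C ->
  forall c, exists m a, pi%:A ^+ m * c = sval phi a.
Proof.
move=> flatC c; have [y phi_y] := generic_iso_retraction.
(* Both sides restrict to to_loc along phi; generic_iso at C[1/pi]. *)
have y_loc : Defs.pcomp y (loc_mapP flatA flatC phi) = to_locP flatC.
  apply: (bij_inj (phi_gen (loc_pi_unit flatC))); apply: pts_ext => a /=.
  by rewrite phi_y /to_loc loc_map_pi.
move: (congr1 (fun p : pts _ _ => sval p c) y_loc) => /=.
rewrite -[sval y c]reprK loc_map_pi /to_loc => /loc_eqP /=; rewrite expr0 mul1r => hc.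
by exists (repr (sval y c)).2, (repr (sval y c)).1; rewrite hc.
Qed.

End GenericIsomorphism.

Lemma neron_blowup_saturated (R : comNzRingType) (pi : R) (A A' : comAlgType R)
  (J : A -> Prop) (f : pts A A') :
  neron_blowup pi J f -> forall t, exists m a, pi%:A ^+ m * t = sval f a.
Proof.
case=> _ [_ [_ gen]] t.
apply: (gen t (fun t => exists m a, pi%:A ^+ m * t = sval f a)).
- move=> x [[a ->]|[j [_ hj]]]; first by exists 0%N, a; rewrite expr0 mul1r.
  by exists 1%N, j; rewrite expr1 mulr_algl.
- by exists 0%N, 1; rewrite expr0 mul1r pts1.
- move=> x y [m [a ha]] [m' [a' ha']].
  exists (m + m')%N, (pi%:A ^+ m' * a - pi%:A ^+ m * a').
  by rewrite ptsB !ptsXM -ha -ha' exprD; ring.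
- move=> x y [m [a ha]] [m' [a' ha']]; exists (m + m')%N, (a * a').
  by rewrite ptsM -ha -ha' exprD; ring.
Qed.

Section BlowupStep.
Variables (R : comNzRingType) (pi : R) (A A' C : comAlgType R).
Variables (phi : pts A C) (phi' : pts A' C) (f : pts A A').
Hypothesis blowup : neron_blowup pi (sch_image_special_ideal pi phi) f.
Hypothesis phi_fact : forall a, sval phi a = sval phi' (sval f a).

Lemma neron_blowup_ker_eq0 : flat_over pi A' ->
  (forall a, sval phi a = 0 -> a = 0) -> forall t, sval phi' t = 0 -> t = 0.
Proof.
move=> flatA' phi_ker t phi't0.
have [m [a hma]] := neron_blowup_saturated blowup t.
have a0 : a = 0 by apply: phi_ker; rewrite phi_fact -hma ptsXM phi't0 mulr0.
by apply: (piXM_eq0 flatA' (k := m)); rewrite hma a0 pts0.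
Qed.

Lemma neron_blowup_divide_pi : flat_over pi C -> forall m c a,
  pi%:A ^+ m.+1 * c = sval phi a -> exists b, pi%:A ^+ m * c = sval phi' b.
Proof.
move=> flatC m c a hc.
have [b hb] : exists b, pi *: b = sval f a.
  case: blowup => _ [_ [divJ _]]; apply: divJ; exists (pi%:A ^+ m * c).
  by rewrite -hc exprS -mulrA mulr_algl.
exists b; apply/eqP; rewrite -subr_eq0; apply/eqP/flatC.
by rewrite scalerBr -ptsZ hb -phi_fact -hc exprS -mulrA mulr_algl subrr.
Qed.

End BlowupStep.

Theorem theorem2p11 (R : idomainType) (pi : R) (hpi : is_dvr_uniformizer pi)
  (C : comAlgType R) (GC : grp_sch C) (flatC : flat_over pi C)
  (A : nat -> comAlgType R) (GA : forall n, grp_sch (A n))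
  (flatA : forall n, flat_over pi (A n))
  (phi : forall n, pts (A n) C)
  (phi_hom : forall n, grp_hom GC (GA n) (phi n))
  (phi0_gen : generic_iso pi (phi 0%N))
  (f : forall n, pts (A n) (A n.+1))
  (f_hom : forall n, grp_hom (GA n.+1) (GA n) (f n))
  (f_blowup : forall n,
      neron_blowup pi (sch_image_special_ideal pi (phi n)) (f n))
  (phi_fact : forall n (a : A n), sval (phi n) a = sval (phi n.+1) (sval (f n) a)) :
  (forall c : C, exists (n : nat) (a : A n), sval (phi n) a = c) /\
  (forall (n : nat) (a : A n), sval (phi n) a = 0 -> exists k : nat, trans f n k a = 0).
Proof.
have phi_ker n a : sval (phi n) a = 0 -> a = 0.
  elim: n a => [|n IHn] a.
    by rewrite -(pts0 (phi 0%N)) => /(generic_iso_inj (flatA 0%N) phi0_gen).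
  exact: neron_blowup_ker_eq0 (f_blowup n) (phi_fact n) (flatA n.+1) IHn a.
have phi_lift m n c a : pi%:A ^+ m * c = sval (phi n) a -> exists n' a', sval (phi n') a' = c.
  elim: m n a => [|m IHm] n a hc; first by exists n, a; rewrite -hc expr0 mul1r.
  have [b hb] := neron_blowup_divide_pi (f_blowup n) (phi_fact n) flatC hc.
  exact: IHm hb.
split=> [c | n a /phi_ker ->]; last by exists 0%N.
have [m [a hc]] := generic_iso_saturated (flatA 0%N) phi0_gen flatC c.
exact: phi_lift hc.
Qed.
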